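(* For every integer $g\ge 0$, let $n'_g$ denote the number of gapsets of genus $g$ and depth at most $3$. Let $(\mathrm{F}_n)_{n\ge0}$ be the Fibonacci numbers ($\mathrm{F}_0=0$, $\mathrm{F}_1=1$, $\mathrm{F}_n=\mathrm{F}_{n-1}+\mathrm{F}_{n-2}$) and $(\mathrm{T}_n)_{n\ge 0}$ the tribonacci numbers ($\mathrm{T}_0=0$, $\mathrm{T}_1=\mathrm{T}_2=1$, $\mathrm{T}_n=\mathrm{T}_{n-1}+\mathrm{T}_{n-2}+\mathrm{T}_{n-3}$ for $n\ge3$). Then for all $g\ge 3$, $$2\mathrm{F}_g \,\le\, n'_g \,\le\, \mathrm{T}_{g+1}.$$
   Context: A gapset is a finite set $G \subset \mathbb{N}_+=\{1,2,3,\dots\}$ such that for all $z \in G$, whenever $z=x+y$ with $x,y\in\mathbb{N}_+$, we have $x\in G$ or $y\in G$. The multiplicity of $G$ is the least $m\ge 1$ with $m\notin G$; its conductor is $c=\max G+1$ (with $c=0$ if $G=\emptyset$); its genus is $|G|$; its depth is $\lceil c/m\rceil$. *)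

From mathcomp Require Import all_boot all_order.
From mathcomp Require Import finmap.
Set Implicit Arguments. Unset Strict Implicit. Unset Printing Implicit Defensive.


Definition is_gapset (G : {fset nat}) : Prop :=
  (forall z, z \in G -> 0 < z) /\
  (forall x y, 0 < x -> 0 < y -> x + y \in G -> (x \in G) \/ (y \in G)).

(* max G (0 for the empty set; G contains only positive integers). *)
Definition fmax (G : {fset nat}) : nat := \max_(x <- G) x.

Lemma fmax_notin (G : {fset nat}) : exists m, (0 < m) && (m \notin G).
Proof.
exists (fmax G).+1; apply/andP; split => //; apply/negP => H.
have : (fmax G).+1 <= fmax G.
  by rewrite /fmax; apply: (@leq_bigmax_seq _ _ _ (fun x => x)).
by rewrite ltnn.
Qed.

Definition multiplicity (G : {fset nat}) : nat := ex_minn (fmax_notin G).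

Definition conductor (G : {fset nat}) : nat :=
  if G == fset0%fset then 0 else (fmax G).+1.

Definition genus (G : {fset nat}) : nat := #|` G|%fset.

(* depth = ceil(c / m)  (m >= 1 always) *)
Definition depth (G : {fset nat}) : nat :=
  let m := multiplicity G in (conductor G + m - 1) %/ m.

Fixpoint fib (n : nat) : nat :=
  match n with
  | 0 => 0
  | 1 => 1
  | (m.+1 as k).+1 => fib k + fib m
  end.

Fixpoint trib (n : nat) : nat :=
  match n with
  | 0 => 0
  | 1 => 1
  | 2 => 1
  | ((m.+1 as k).+1 as j).+1 => trib j + trib k + trib m
  end.

From mathcomp Require Import all_boot all_order.
From mathcomp Require Import finmap zify.

(* A gapset G of multiplicity m contains 1, ..., m - 1 and,
   as m is not in G, x + m in G forces x in G.  So in each residue class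
   r = 1, ..., m - 1 it contains exactly r, r + m, ..., r + k_r m, and G is
   determined by the word (k_1, ..., k_(m-1)); its genus is the weight
   sum (k_r + 1), and depth <= 3 means k_r <= 2.  Hence the gapsets counted by
   n'_g inject into the words over {0,1,2} of weight g, of which there are
   T_(g+1).  Conversely every word over {0,1} encodes a gapset (of depth <= 2),
   and so does every word 2 v with v over {0,1}, because the only element above
   2m is then 2m + 1 = m + (m + 1) with m + 1 in the set.  This gives
   F_(g+1) + F_(g-2) = 2 F_g gapsets of genus g. *)

Lemma edivn_uniq m q1 q2 r1 r2 : r1 < m -> r2 < m ->
  q1 * m + r1 = q2 * m + r2 -> q1 = q2 /\ r1 = r2.
Proof.
move=> r1m r2m E; have m0 : 0 < m by apply: leq_ltn_trans r1m.
have := congr1 (divn^~ m) E; have := congr1 (modn^~ m) E.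
by rewrite /= !modnMDl !modn_small // !divnMDl // !divn_small // !addn0.
Qed.

Definition gapsetb (G : {fset nat}) : bool :=
  (0 \notin G) && all (fun z => all (fun x => (x \in G) || (z - x \in G)) (iota 1 z.-1)) G.

Lemma gapsetP (G : {fset nat}) : reflect (is_gapset G) (gapsetb G).
Proof.
apply: (iffP andP) => [[G0 /allP Gsplit] | [Gpos Gsplit]]; split.
- by move=> z zG; rewrite lt0n; apply: contraNneq G0 => <-.
- move=> x y x0 y0 /Gsplit /allP /(_ x); rewrite mem_iota addKn.
  by case/(_ _)/orP; [lia | left | right].
- by apply/negP => /Gpos.
- apply/allP => z zG; apply/allP => x; rewrite mem_iota => x_lt.
  have zE : x + (z - x) = z by lia.
  by case: (Gsplit x (z - x)) => [|||->|->]; rewrite ?zE ?orbT //; lia.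
Qed.

Lemma gapset_down_mul {G : {fset nat}} {m q x : nat} : is_gapset G -> m \notin G -> 0 < x ->
  q * m + x \in G -> x \in G.
Proof.
move=> [_ Gsplit] mG x0; elim: q => [|q IHq] //; rewrite mulSn -addnA.
have [-> | m0] := posnP m; first by rewrite muln0.
by case/Gsplit => [||mG'|/IHq //]; [lia | lia | rewrite mG' in mG].
Qed.

Lemma multiplicity_gt0 (G : {fset nat}) : 0 < multiplicity G.
Proof. by rewrite /multiplicity; case: ex_minnP => m /andP[]. Qed.

Lemma multiplicity_notin (G : {fset nat}) : multiplicity G \notin G.
Proof. by rewrite /multiplicity; case: ex_minnP => m /andP[]. Qed.

Lemma mem_lt_multiplicity (G : {fset nat}) k : 0 < k < multiplicity G -> k \in G.
Proof.
rewrite /multiplicity; case: ex_minnP => m _ m_min /andP[k0 km].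
by apply: contraTT km => kG; rewrite -leqNgt m_min // k0.
Qed.

Lemma multiplicity_eq (G : {fset nat}) m :
  0 < m -> m \notin G -> (forall k, 0 < k < m -> k \in G) -> multiplicity G = m.
Proof.
move=> m0 mG ltm_G; apply/anti_leq/andP; split.
  by rewrite /multiplicity; case: ex_minnP => m' _ -> //; rewrite m0.
rewrite leqNgt; apply: contra (multiplicity_notin G) => lt_mult.
by rewrite ltm_G // multiplicity_gt0.
Qed.

Lemma leq_fmax {G : {fset nat}} {x : nat} : x \in G -> x <= fmax G.
Proof. by move=> xG; apply: (@leq_bigmax_seq _ _ _ id). Qed.

Lemma conductor_leqP (G : {fset nat}) c :
  reflect (forall x, x \in G -> x < c) (conductor G <= c).
Proof.
rewrite /conductor; have [-> | [x0 x0G]] := fset_0Vmem G.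
  by apply: (iffP idP) => // _ x; rewrite inE.
have /negPf -> : G != fset0 by apply/fset0Pn; exists x0.
apply: (iffP idP) => [le_c x xG | lt_c].
  by apply: leq_trans le_c; rewrite ltnS leq_fmax.
case: c lt_c (lt_c x0 x0G) => // c lt_c _.
by rewrite ltnS; apply/bigmax_leqP_seq => x xG _; rewrite -ltnS; apply: lt_c.
Qed.

Lemma depth_leqP (G : {fset nat}) d :
  reflect (forall x, x \in G -> x < d * multiplicity G) (depth G <= d).
Proof.
have m0 := multiplicity_gt0 G.
rewrite /depth -ltnS ltn_divLR // mulSn.
set c := conductor G; set m := multiplicity G in m0 *.
have -> : (c + m - 1 < m + d * m) = (c <= d * m) by lia.
exact: conductor_leqP.
Qed.


Definition kunz_seq (w : seq nat) : seq nat :=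
  [seq q * (size w).+1 + i.+1 | i <- iota 0 (size w), q <- iota 0 (nth 0 w i).+1].

Definition kunz_set (w : seq nat) : {fset nat} := [fset x in kunz_seq w]%fset.

Definition weight (w : seq nat) : nat := sumn [seq x.+1 | x <- w].

Lemma weight_cons x w : weight (x :: w) = x.+1 + weight w.
Proof. by []. Qed.

Lemma mem_kunz_set w q r : r <= size w ->
  (q * (size w).+1 + r \in kunz_set w) = (0 < r) && (q <= nth 0 w r.-1).
Proof.
move=> r_le; rewrite inE; apply/allpairsPdep/andP => [[i [q' []]] | [r0 q_le]].
  rewrite !mem_iota /= => i_lt q'_le /edivn_uniq[] // -> ->.
  by rewrite ltnS.
by exists r.-1, q; rewrite !mem_iota prednK //; split => //; lia.
Qed.

Lemma mem_kunz_set_small w x : 0 < x <= size w -> x \in kunz_set w.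
Proof. by case/andP=> x0 x_le; rewrite -[x]add0n -(mul0n (size w).+1) mem_kunz_set ?x0. Qed.

Lemma multiplicity_kunz_set w : multiplicity (kunz_set w) = (size w).+1.
Proof.
apply: multiplicity_eq => // [|x /mem_kunz_set_small//].
by rewrite -[X in X \notin _]mul1n -[_ * _]addn0 mem_kunz_set.
Qed.

Lemma kunz_set_ltn {w : seq nat} {d x : nat} :
  all (leq^~ d) w -> x \in kunz_set w -> x < d.+1 * (size w).+1.
Proof.
move=> /(all_nthP 0) w_le; set m := (size w).+1.
have r_le : x %% m <= size w by rewrite -ltnS ltn_pmod.
rewrite (divn_eq x m) mem_kunz_set // => /andP[r0 q_le].
have {q_le} : x %/ m <= d by apply: leq_trans q_le (w_le _ _); rewrite prednK.
nia.
Qed.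

Lemma depth_kunz_set w d : (depth (kunz_set w) <= d.+1) = all (leq^~ d) w.
Proof.
apply/depth_leqP/idP; rewrite multiplicity_kunz_set; last first.
  by move=> w_le x; apply: kunz_set_ltn w_le.
move=> ltS; apply/(all_nthP 0) => i i_lt; have := ltS (nth 0 w i * (size w).+1 + i.+1).
rewrite mem_kunz_set // leqnn => /(_ isT); nia.
Qed.

Lemma genus_kunz_set w : genus (kunz_set w) = weight w.
Proof.
rewrite /genus card_fseq undup_id.
  rewrite size_allpairs_dep /weight -[in RHS](mkseq_nth 0 w) -map_comp.
  by congr sumn; apply: eq_map => i; rewrite /= size_iota.
apply: allpairs_uniq_dep => [|i _|[i q] [j p]]; rewrite ?iota_uniq //.
move=> /allpairsPdep[i' [_ [i_lt _ [Ei _]]]] /allpairsPdep[j' [_ [j_lt _ [Ej _]]]].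
rewrite -{}Ei -{}Ej !mem_iota /= in i_lt j_lt.
by move=> /= /edivn_uniq[] // -> [->].
Qed.

Lemma kunz_set_inj : injective kunz_set.
Proof.
have nth_le w1 w2 i : kunz_set w1 = kunz_set w2 -> i < size w1 -> nth 0 w1 i <= nth 0 w2 i.
  move=> E i_lt; have := congr1 multiplicity E; rewrite !multiplicity_kunz_set => -[sz].
  have := mem_kunz_set w1 (nth 0 w1 i) _ i_lt.
  by rewrite leqnn E sz mem_kunz_set -?sz // => /andP[].
move=> w1 w2 E; have := congr1 multiplicity E; rewrite !multiplicity_kunz_set => -[sz].
apply: (eq_from_nth (x0 := 0)) => // i i_lt.
by apply/anti_leq; rewrite !nth_le // -sz.
Qed.


Definition kunz_word (G : {fset nat}) : seq nat :=
  let m := multiplicity G in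
  [seq \max_(q < (fmax G).+1 | q * m + r \in G) q | r <- iota 1 m.-1].

Lemma kunz_wordK {G : {fset nat}} : is_gapset G -> kunz_set (kunz_word G) = G.
Proof.
move=> /[dup] gG [G_gt0 _]; have m0 := multiplicity_gt0 G; have mG := multiplicity_notin G.
set m := multiplicity G in m0 mG *.
have sz : (size (kunz_word G)).+1 = m by rewrite size_map size_iota prednK.
apply/fsetP => x; rewrite (divn_eq x m); set q := x %/ m; set r := x %% m.
have r_lt : r < m by rewrite ltn_pmod.
rewrite -{1}sz mem_kunz_set; last by rewrite -ltnS sz.
have [r0 | r_gt0] := posnP r.
  rewrite r0 addn0 /=; apply/esym/negP; case: q => [/G_gt0 // | q].
  by rewrite mulSnr => /(gapset_down_mul gG mG m0); apply/negP.
have r_idx : r.-1 < m.-1 by rewrite -ltnS !prednK.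
rewrite /= (nth_map 0) ?size_iota // nth_iota // add1n prednK //.
have rG : 0 * m + r \in G by rewrite mem_lt_multiplicity ?r_gt0.
apply/idP/idP => [|qG].
  rewrite (bigmax_eq_arg ord0) //; case: arg_maxnP => //= k kG _ q_le.
  have kE : k * m + r = (k - q) * m + (q * m + r) by rewrite addnA -mulnDl subnK.
  by rewrite kE in kG; apply: gapset_down_mul kG; rewrite // addn_gt0 r_gt0 orbT.
have q_lt : q < (fmax G).+1.
  by rewrite ltnS (leq_trans _ (leq_fmax qG)) // (leq_trans (leq_pmulr _ m0)) ?leq_addr.
exact: (leq_bigmax_cond (Ordinal q_lt)).
Qed.

Lemma is_gapset_kunz_set w :
  (forall x y, (size w).+1 <= x -> (size w).+1 <= y -> x + y \in kunz_set w ->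
     (x \in kunz_set w) || (y \in kunz_set w)) ->
  is_gapset (kunz_set w).
Proof.
move=> split_large; split => [z | x y x0 y0 xyS].
  rewrite (divn_eq z (size w).+1) mem_kunz_set; last by rewrite -ltnS ltn_pmod.
  by case/andP => r0 _; rewrite addn_gt0 r0 orbT.
have [x_lt | x_ge] := ltnP x (size w).+1; first by left; rewrite mem_kunz_set_small ?x0.
have [y_lt | y_ge] := ltnP y (size w).+1; first by right; rewrite mem_kunz_set_small ?y0.
by apply/orP/split_large.
Qed.

Lemma is_gapset_kunz_set_binary w : all (leq^~ 1) w -> is_gapset (kunz_set w).
Proof.
move=> w_le; apply: is_gapset_kunz_set => x y x_ge y_ge /(kunz_set_ltn w_le).
by rewrite mulSn mul1n; lia.
Qed.

Lemma is_gapset_kunz_set_cons2 w : all (leq^~ 1) w -> is_gapset (kunz_set (2 :: w)).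
Proof.
move=> w_le; apply: is_gapset_kunz_set => x y.
set m := (size (2 :: w)).+1 => x_ge y_ge xyS.
have w2_le : all (leq^~ 2) (2 :: w) by apply: sub_all w_le => a /leqW.
have := kunz_set_ltn w2_le xyS; rewrite -/m => xy_lt.
have xyE : x + y = 2 * m + (x + y - 2 * m) by lia.
have r_le : x + y - 2 * m <= size (2 :: w) by rewrite /m in xy_lt *; lia.
move: xyS; rewrite xyE mem_kunz_set // => /andP[r0].
have [r1 _ | r_ne1] := eqVneq (x + y - 2 * m) 1.
  have m1S : 1 * m + 1 \in kunz_set (2 :: w) by rewrite mem_kunz_set.
  have [->|->] : x = 1 * m + 1 \/ y = 1 * m + 1 by lia.
    by rewrite m1S.
  by rewrite m1S orbT.
case: (x + y - 2 * m) r0 r_ne1 => [|[|r]] //= _ _.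
case: (ltnP r (size w)) => [/(all_nthP 0 w_le) le1 | /(nth_default 0) ->] //.
by rewrite ltnNge le1.
Qed.

Lemma cons_inj {T : Type} (x : T) : injective (cons x).
Proof. by move=> u v []. Qed.

Lemma mem_map_cons (c x : nat) (ws : seq (seq nat)) w :
  (x :: w \in [seq c :: v | v <- ws]) = (x == c) && (w \in ws).
Proof.
case: eqP => [-> | ne]; first by rewrite (mem_map (cons_inj c)).
by apply/mapP => -[v _ [/ne]].
Qed.

Lemma nil_notin_map_cons (c : nat) (ws : seq (seq nat)) : [::] \notin [seq c :: v | v <- ws].
Proof. by apply/mapP => -[]. Qed.

Fixpoint ternary_words (g : nat) : seq (seq nat) :=
  match g with
  | 0 => [:: [::]]
  | g1.+1 => [seq 0 :: w | w <- ternary_words g1] ++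
      match g1 with
      | 0 => [::]
      | g2.+1 => [seq 1 :: w | w <- ternary_words g2] ++
          match g2 with
          | 0 => [::]
          | g3.+1 => [seq 2 :: w | w <- ternary_words g3]
          end
      end
  end.

Lemma ternary_wordsE g : ternary_words g.+3 =
  [seq 0 :: w | w <- ternary_words g.+2] ++ [seq 1 :: w | w <- ternary_words g.+1] ++
  [seq 2 :: w | w <- ternary_words g].
Proof. by []. Qed.




Lemma mem_cons_ternary_words g x w :
  (x :: w \in ternary_words g) = [&& x <= 2, x < g & w \in ternary_words (g - x.+1)].
Proof.
case: g => [|[|[|g]]]; last first.
  rewrite ternary_wordsE !mem_cat !mem_map_cons.
  by case: x => [|[|[|x]]]; rewrite ?orbF ?andbF ?subSS ?subn0.
all: by case: x => [|[|[|x]]]; rewrite ?inE ?eqseq_cons ?andbT ?orbF.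
Qed.

Lemma mem_ternary_words g w :
  (w \in ternary_words g) = all (leq^~ 2) w && (weight w == g).
Proof.
elim: w g => [|x w IHw] g.
  case: g => [|[|[|g]]] //.
  by rewrite ternary_wordsE !mem_cat !(negbTE (nil_notin_map_cons _ _)).
rewrite mem_cons_ternary_words IHw weight_cons /=.
lia.
Qed.

Lemma uniq_ternary_words g : uniq (ternary_words g).
Proof.
have disj (c d : nat) us vs : d != c -> ~~ has (mem [seq c :: u | u <- us]) [seq d :: v | v <- vs].
  by move=> dc; apply/hasPn => _ /mapP[v _ ->] /=; rewrite mem_map_cons (negbTE dc).
elim/ltn_ind: g => -[|[|[|g]]] IH //.
rewrite ternary_wordsE !cat_uniq has_cat negb_or !disj // !(map_inj_uniq (cons_inj _)) !IH //; lia.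
Qed.

Lemma size_ternary_words g : size (ternary_words g) = trib g.+1.
Proof.
elim/ltn_ind: g => -[|[|[|g]]] IH //.
rewrite ternary_wordsE !size_cat !size_map !IH ?addnA //; lia.
Qed.

Lemma count_binary_ternary_words g :
  count (all (leq^~ 1)) (ternary_words g) = fib g.+1.
Proof.
elim/ltn_ind: g => -[|[|[|g]]] IH //.
rewrite ternary_wordsE !count_cat !count_map (@eq_count _ (preim (cons 2) _) pred0) // count_pred0.
rewrite !(@eq_count _ (preim (cons _) _) (all (leq^~ 1))) // addn0 !IH //; lia.
Qed.

Definition gapset_words (g : nat) : seq (seq nat) :=
  [seq w <- ternary_words g | gapsetb (kunz_set w)].

Lemma gapset_wordsP g G :
  G \in [seq kunz_set w | w <- gapset_words g] <->
  [/\ is_gapset G, genus G = g & depth G <= 3].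
Proof.
split => [/mapP[w] | [gG <- dG]].
  rewrite mem_filter mem_ternary_words => /and3P[/gapsetP gw w2 /eqP <-] ->.
  by rewrite genus_kunz_set depth_kunz_set.
have GE := kunz_wordK gG; rewrite -GE genus_kunz_set; apply: map_f.
by rewrite mem_filter mem_ternary_words -depth_kunz_set GE dG eqxx !andbT; apply/gapsetP.
Qed.

Lemma size_gapset_words_leq g : size (gapset_words g) <= trib g.+1.
Proof. by rewrite size_filter -size_ternary_words count_size. Qed.

Lemma fib_leq_size_gapset_words g : 2 * fib g.+3 <= size (gapset_words g.+3).
Proof.
pose binary k := [seq w <- ternary_words k | all (leq^~ 1) w].
have binaryP k w : w \in binary k -> all (leq^~ 1) w /\ weight w = k.
  by rewrite mem_filter mem_ternary_words => /and3P[? _ /eqP].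
have ternary_of_binary w : all (leq^~ 1) w -> all (leq^~ 2) w.
  by apply: sub_all => a /leqW.
set L := binary g.+3 ++ [seq 2 :: w | w <- binary g].
have -> : 2 * fib g.+3 = size L.
  rewrite size_cat size_map !size_filter !count_binary_ternary_words.
  have fibSS k : fib k.+2 = fib k.+1 + fib k by [].
  rewrite !fibSS; lia.
apply: uniq_leq_size => [|w].
  rewrite cat_uniq !filter_uniq ?uniq_ternary_words // (map_inj_uniq (cons_inj 2)).
  rewrite filter_uniq ?uniq_ternary_words // andbT.
  by apply/hasPn => _ /mapP[w _ ->]; rewrite mem_filter.
rewrite mem_cat => /orP[/binaryP[w_le <-] | /mapP[u /binaryP[u_le u_wt] ->]];
  rewrite mem_filter mem_ternary_words.
  by rewrite ternary_of_binary ?eqxx ?andbT //; apply/gapsetP/is_gapset_kunz_set_binary.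
rewrite /= ternary_of_binary // weight_cons u_wt eqxx !andbT.
by apply/gapsetP/is_gapset_kunz_set_cons2.
Qed.

Theorem mainTheorem3 (g : nat) : 3 <= g ->
  exists s : seq {fset nat},
    [/\ uniq s,
        (forall G : {fset nat},
           G \in s <-> [/\ is_gapset G, genus G = g & depth G <= 3]),
        2 * fib g <= size s
      & size s <= trib g.+1].
Proof.
move=> g_ge3; exists [seq kunz_set w | w <- gapset_words g]; split.
- by rewrite (map_inj_uniq kunz_set_inj) filter_uniq // uniq_ternary_words.
- exact: gapset_wordsP.
- by rewrite size_map -(subnK g_ge3) addn3 fib_leq_size_gapset_words.
- by rewrite size_map size_gapset_words_leq.
Qed.
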